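(* Let $n,m\in\mathbb{N}$ and let $(A_1,B_1)\neq(A_2,B_2)$ be two pairs in $X_n^\star\times X_m^\star$ such that $A_1B_1=T^kA_2B_2$ for some $k\in\mathbb{Z}$. Then the entries of the matrix $A_1B_1$ have a common divisor strictly larger than $1$.
   Context: $T=\begin{pmatrix}1&1\\0&1\end{pmatrix}$. $X_N^\star=\{\begin{pmatrix}c&b\\0&N/c\end{pmatrix}:c\ge1,\ c\mid N,\ 0\le b\le N/c-1,\ \gcd(c,b,N/c)=1\}$. *)

From mathcomp Require Import all_boot all_order all_algebra.
Set Implicit Arguments. Unset Strict Implicit. Unset Printing Implicit Defensive.
Import Order.TTheory GRing.Theory Num.Theory.
Local Open Scope ring_scope.

Definition mk2 (a b c d : int) : 'M[int]_2 :=
  \matrix_(i < 2, j < 2)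
    if (i == 0 :> nat) then (if (j == 0 :> nat) then a else b)
    else (if (j == 0 :> nat) then c else d).

Definition Tmx : 'M[int]_2 := mk2 1 1 0 1.

(* A \in X_N^star : A = [[c, b], [0, N/c]] with c >= 1, c | N,
   0 <= b <= N/c - 1 (i.e. b < N/c), gcd(c, b, N/c) = 1 *)
Definition Xstar (N : nat) (A : 'M[int]_2) : Prop :=
  exists c b : nat,
    [/\ (1 <= c)%N, (c %| N)%N, (b < N %/ c)%N,
        gcdn (gcdn c b) (N %/ c) = 1%N
      & A = mk2 c%:Z b%:Z 0 (N %/ c)%:Z].

(* Write A = [c b; 0 d] and B = [e f; 0 d'], so that AB = [ce, cf + bd'; 0, dd'], and
   left multiplication by T^k only adds k dd' to the upper right entry.  If the entries
   of A1 B1 have no common divisor, neither have c and d' (a common divisor of c and d'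
   divides all three entries), so e = gcd(ce, ed') = gcd((AB)_00, m) is read off the
   product; hence so are c, d = n/c and d' = m/e.  Reducing the upper right entries mod d'
   gives d' | c (f1 - f2), so f1 = f2 as c is invertible mod d'; then d | b1 - b2 forces
   b1 = b2. *)

From mathcomp Require Import all_boot all_order all_algebra.
From mathcomp Require Import zify ring.
Import Order.TTheory GRing.Theory Num.Theory.
Local Open Scope ring_scope.

Lemma mulmx_mk2 (a b c d a' b' c' d' : int) :
  mk2 a b c d *m mk2 a' b' c' d' =
  mk2 (a * a' + b * c') (a * b' + b * d') (c * a' + d * c') (c * b' + d * d').
Proof.
apply/matrixP => i j; rewrite !mxE !big_ord_recr big_ord0 /= !mxE add0r.
by case: i => [[|[|i]] Hi] //; case: j => [[|[|j]] Hj].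
Qed.

Lemma mk2_inj (a b c d a' b' c' d' : int) :
  mk2 a b c d = mk2 a' b' c' d' -> [/\ a = a', b = b', c = c' & d = d'].
Proof.
move=> eq_mx; have entry i j := congr1 (fun M : 'M[int]_2 => M i j) eq_mx.
by move: (entry 0 0) (entry 0 1) (entry 1 0) (entry 1 1); rewrite !mxE.
Qed.

Lemma mk2_1 : mk2 1 0 0 1 = 1.
Proof.
apply/matrixP => i j; rewrite !mxE.
by case: i => [[|[|i]] Hi] //; case: j => [[|[|j]] Hj].
Qed.

Lemma mulr_mk2_unipotent (i j : int) :
  mk2 1 i 0 1 * mk2 1 j 0 1 = mk2 1 (i + j) 0 1.
Proof. by rewrite -mulmxE mulmx_mk2; congr mk2; ring. Qed.

Lemma Tmx_exprn (n : nat) : Tmx ^+ n = mk2 1 n 0 1.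
Proof.
elim: n => [|n IHn]; first by rewrite expr0 mk2_1.
by rewrite exprS IHn mulr_mk2_unipotent; congr mk2; lia.
Qed.

Lemma Tmx_exprz (k : int) : Tmx ^ k = mk2 1 k 0 1.
Proof.
case: k => [n | n]; first exact: Tmx_exprn.
rewrite NegzE -exprnN Tmx_exprn.
set j : int := n.+1.
have inv_l : mk2 1 (- j) 0 1 * mk2 1 j 0 1 = 1 by rewrite mulr_mk2_unipotent addNr mk2_1.
have inv_r : mk2 1 j 0 1 * mk2 1 (- j) 0 1 = 1 by rewrite mulr_mk2_unipotent addrN mk2_1.
have unit_j : mk2 1 j 0 1 \is a GRing.unit by apply/unitrP; exists (mk2 1 (- j) 0 1).
by rewrite -[LHS]mulr1 -inv_r mulKr.
Qed.

Lemma mulmx_upper (c b d e f d' : nat) :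
  mk2 c b 0 d *m mk2 e f 0 d' = mk2 (c * e)%N (c * f + b * d')%N 0 (d * d')%N.
Proof. by rewrite mulmx_mk2; congr mk2; rewrite ?PoszD ?PoszM; ring. Qed.

Lemma Tmx_exprz_mul_upper (k : int) (a b d : int) :
  Tmx ^ k *m mk2 a b 0 d = mk2 a (b + k * d) 0 d.
Proof. by rewrite Tmx_exprz mulmx_mk2; congr mk2; ring. Qed.

Lemma XstarP (N : nat) (A : 'M[int]_2) :
  Xstar N A -> exists c b d : nat, [/\ (0 < c)%N, (c * d)%N = N, (b < d)%N & A = mk2 c b 0 d].
Proof.
by case=> c [b [c_gt0 c_dvd_N b_lt _ ->]]; exists c, b, (N %/ c)%N; rewrite mulnC divnK.
Qed.

Lemma gcdn3_shift (a : nat) [b b' d : nat] [k : int] :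
  b%:Z = b'%:Z + k * d%:Z -> gcdn (gcdn a b) d = gcdn (gcdn a b') d.
Proof.
move=> eq_b; have [gcd_db] : gcdz d b = gcdz d b' by rewrite eq_b addrC gcdzMDl.
by rewrite -!gcdnA ![gcdn _ d]gcdnC gcd_db.
Qed.

Lemma coprime_upper_factors [c b d e f d' : nat] :
  gcdn (gcdn (c * e) (c * f + b * d')) (d * d') = 1%N -> coprime c d'.
Proof.
move=> primitive; rewrite /coprime -dvdn1 -primitive !dvdn_gcd.
have g_dvd_c : (gcdn c d' %| c)%N := dvdn_gcdl c d'.
have g_dvd_d' : (gcdn c d' %| d')%N := dvdn_gcdr c d'.
by rewrite (dvdn_mulr e g_dvd_c) (dvdn_mull d g_dvd_d')
  (dvdn_add (dvdn_mulr f g_dvd_c) (dvdn_mull b g_dvd_d')).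
Qed.

Lemma gcdn_mul_coprime [c d' : nat] (e : nat) : coprime c d' -> gcdn (c * e) (e * d') = e.
Proof. by move=> /eqP cop; rewrite mulnC -muln_gcdr cop muln1. Qed.

Lemma eq_of_dvdz_sub [d x y : nat] :
  (x < d)%N -> (y < d)%N -> (d%:Z %| x%:Z - y%:Z)%Z -> x = y.
Proof. by move=> x_lt y_lt; rewrite -eqz_mod_dvd !modz_nat !modn_small // => /eqP[]. Qed.

Lemma upper_offsets_unique [c d d' b1 b2 f1 f2 : nat] [k : int] :
  coprime c d' -> (b1 < d)%N -> (b2 < d)%N -> (f1 < d')%N -> (f2 < d')%N ->
  (c * f1 + b1 * d')%N%:Z = (c * f2 + b2 * d')%N%:Z + k * (d * d')%N%:Z ->
  f1 = f2 /\ b1 = b2.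
Proof.
move=> cop b1_lt b2_lt f1_lt f2_lt; rewrite !PoszD !PoszM => eq_off.
have cop_z : coprimez d' c by rewrite coprimezE coprime_sym.
have eq_f : f1 = f2.
  apply: (eq_of_dvdz_sub f1_lt f2_lt); rewrite -(Gauss_dvdzr _ cop_z).
  by apply/dvdzP; exists (b2%:Z - b1%:Z + k * d); lia.
subst f2; split=> //; apply: (eq_of_dvdz_sub b1_lt b2_lt).
have d'_neq0 : d'%:Z != 0 by rewrite eqz_nat -lt0n (leq_ltn_trans _ f1_lt).
have : (b1%:Z - b2%:Z) * d' = (k * d) * d' by lia.
by move/(mulIf d'_neq0) ->; apply: dvdz_mull.
Qed.

Lemma mk2_upper_common_divisor (a b d : nat) :
  (0 < a)%N -> gcdn (gcdn a b) d != 1%N ->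
  exists g : nat, (1 < g)%N /\ forall i j : 'I_2, (g%:Z %| mk2 a b 0 d i j)%Z.
Proof.
move=> a_gt0 g_neq1; exists (gcdn (gcdn a b) d); split.
  by rewrite ltn_neqAle eq_sym g_neq1 !gcdn_gt0 a_gt0.
move=> i j; rewrite mxE; case: ifP => _; case: ifP => _; rewrite ?dvdz0 // dvdzE /=.
- exact: dvdn_trans (dvdn_gcdl _ _) (dvdn_gcdl _ _).
- exact: dvdn_trans (dvdn_gcdl _ _) (dvdn_gcdr _ _).
- exact: dvdn_gcdr.
Qed.

Section UpperFactorization.

Context {c1 b1 d1 e1 f1 d1' c2 b2 d2 e2 f2 d2' : nat} {k : int}.
Hypotheses (c1_gt0 : (0 < c1)%N) (e1_gt0 : (0 < e1)%N).
Hypotheses (b1_lt : (b1 < d1)%N) (b2_lt : (b2 < d2)%N).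
Hypotheses (f1_lt : (f1 < d1')%N) (f2_lt : (f2 < d2')%N).
Hypotheses (eq_n : (c1 * d1 = c2 * d2)%N) (eq_m : (e1 * d1' = e2 * d2')%N).
Hypothesis eq_prod : mk2 c1 b1 0 d1 *m mk2 e1 f1 0 d1' =
  Tmx ^ k *m (mk2 c2 b2 0 d2 *m mk2 e2 f2 0 d2').
Hypothesis primitive : gcdn (gcdn (c1 * e1) (c1 * f1 + b1 * d1')) (d1 * d1') = 1%N.

Lemma upper_product_eqs :
  [/\ (c1 * e1 = c2 * e2)%N,
      (c1 * f1 + b1 * d1')%N%:Z = (c2 * f2 + b2 * d2')%N%:Z + k * (d2 * d2')%N%:Z
    & (d1 * d1' = d2 * d2')%N].
Proof.
move: eq_prod; rewrite !mulmx_upper Tmx_exprz_mul_upper => /mk2_inj[eq_a eq_b _ eq_d].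
by split=> //; [case: eq_a | case: eq_d].
Qed.

Lemma coprime_c2_d2' : coprime c2 d2'.
Proof.
have [eq_a eq_b eq_d] := upper_product_eqs.
apply: (@coprime_upper_factors _ b2 d2 e2 f2).
by rewrite -eq_a -(gcdn3_shift _ eq_b) -eq_d.
Qed.

Lemma upper_factorization_unique :
  mk2 c1 b1 0 d1 = mk2 c2 b2 0 d2 /\ mk2 e1 f1 0 d1' = mk2 e2 f2 0 d2'.
Proof.
have [eq_a eq_b _] := upper_product_eqs.
have coprime1 := coprime_upper_factors primitive.
have eq_e : e1 = e2.
  by rewrite -(gcdn_mul_coprime e1 coprime1) -(gcdn_mul_coprime e2 coprime_c2_d2') eq_a eq_m.
subst e2.
have eq_c : c1 = c2 by apply/eqP; rewrite -(eqn_pmul2r e1_gt0) eq_a.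
subst c2.
have eq_d : d1 = d2 by apply/eqP; rewrite -(eqn_pmul2l c1_gt0) eq_n.
have eq_d' : d1' = d2' by apply/eqP; rewrite -(eqn_pmul2l e1_gt0) eq_m.
subst d2 d2'.
by have [-> ->] := upper_offsets_unique coprime1 b1_lt b2_lt f1_lt f2_lt eq_b.
Qed.

End UpperFactorization.

Theorem mainTheorem15 (n m : nat) (A1 B1 A2 B2 : 'M[int]_2) (k : int) :
  Xstar n A1 -> Xstar m B1 -> Xstar n A2 -> Xstar m B2 ->
  (A1, B1) <> (A2, B2) ->
  A1 *m B1 = (Tmx ^ k) *m (A2 *m B2) ->
  exists d : nat, (1 < d)%N /\ forall i j : 'I_2, (d%:Z %| (A1 *m B1) i j)%Z.
Proof.
move=> /XstarP[c1 [b1 [d1 [c1_gt0 <- b1_lt ->]]]].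
move=> /XstarP[e1 [f1 [d1' [e1_gt0 <- f1_lt ->]]]].
move=> /XstarP[c2 [b2 [d2 [_ /esym eq_n b2_lt ->]]]].
move=> /XstarP[e2 [f2 [d2' [_ /esym eq_m f2_lt ->]]]].
move=> neq_pairs eq_prod; rewrite mulmx_upper.
have [primitive | not_primitive] :=
  eqVneq (gcdn (gcdn (c1 * e1) (c1 * f1 + b1 * d1')) (d1 * d1')) 1%N.
  by case: neq_pairs; have [-> ->] := upper_factorization_unique
    c1_gt0 e1_gt0 b1_lt b2_lt f1_lt f2_lt eq_n eq_m eq_prod primitive.
by apply: mk2_upper_common_divisor not_primitive; rewrite muln_gt0 c1_gt0.
Qed.
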